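(* Let $1\le k\le n$ and let $Y$ be a Young diagram of shape $\lambda=(\lambda_1,\ldots,\lambda_k)$ contained in the $k\times(n-k)$ rectangle, justified to the northwest. There is a bijection from the set of Catalan paths of size $(n,k)$ constrained by $Y$ to the set of Catalan tableaux of size $(n,k)$ whose Young diagram is $Y$ (equivalently, of type $\tau$ with $\lambda(\tau)=\lambda$), and this bijection preserves weight: if the Catalan path $C$ maps to the tableau $T$, then $\mathrm{wt}(C)=\mathrm{wt}(T)$.
   Context: Coordinates: label the vertical grid lines of the $k\times(n-k)$ rectangle $0,1,\ldots,n-k$ from left to right; rows are numbered $1,\ldots,k$ from top to bottom; row $i$ of $Y$ consists of the leftmost $\lambda_i$ boxes, $n-k\ge\lambda_1\ge\cdots\ge\lambda_k\ge0$. Let $L$ be the lattice path from the northeast corner to the southwest corner of the rectangle, using south and west unit steps, that follows the southeast border of $Y$. Catalan path: a lattice path from the northeast corner to the southwest corner of the rectangle using unit south and west steps that never crosses the southeast border of $Y$ (i.e. stays weakly inside $Y$ together with its boundary). Equivalently it is described by $(C_1,\ldots,C_k)$ with $C_1\ge\cdots\ge C_k\ge0$ and $C_i\le\lambda_i$, where $C_i$ is the label of the vertical grid line on which the path's south step in row $i$ lies. Edge weights: a south step lying on the west border of the rectangle (i.e. $C_i=0$) has weight $1/\beta$; any other south step has weight $1$; a west step lying on $L$ has weight $1/\alpha$; any other west step has weight $1$. The path weight $\mathrm{pwt}(C)$ is the product of the edge weights and $\mathrm{wt}(C)=(\alpha\beta)^n\,\mathrm{pwt}(C)$. Catalan tableau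 of size $(n,k)$ with Young diagram $Y$: a filling of the boxes of $Y$ with $\alpha$'s and $\beta$'s (at most one per box) such that (i) every box in the same column and above an $\alpha$ is empty; (ii) every box in the same row and left of a $\beta$ is empty; (iii) every box not above an $\alpha$ and not left of a $\beta$ contains an $\alpha$ or a $\beta$. Its type is the word read along $L$ from northeast to southwest ($1$ for south, $0$ for west steps); $\lambda(\tau)_i$ is the number of $0$'s after the $i$-th $1$ of $\tau$. Its weight is $\mathrm{wt}(T)=(\alpha\beta)^n(1/\alpha)^{f_{\mathrm{col}}(T)}(1/\beta)^{f_{\mathrm{row}}(T)}$, where $f_{\mathrm{col}}(T)$ is the number of columns of the rectangle containing no $\alpha$ and $f_{\mathrm{row}}(T)$ the number of rows of the rectangle containing no $\beta$. *)

From HB Require Import structures.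
From mathcomp Require Import all_boot all_order all_algebra.
Unset Printing Implicit Defensive.
Import GRing.Theory.

(* Conventions:
   - n, k : sizes, rectangle k x (n-k); rows 'I_k (row i+1 of the paper is
     index i), columns 'I_(n-k) (column j of boxes lies between vertical
     grid lines j and j+1).
   - lam : nat -> nat, lam i = lambda_{i+1} for i < k.
   - A Catalan path is C : {ffun 'I_k -> 'I_(n-k).+1}, C i = C_{i+1}
     (label of the vertical grid line of the south step in row i+1).
   - Fillings: {ffun 'I_k * 'I_(n-k) -> option bool}:
     None = empty, Some true = alpha, Some false = beta. *)

Section Defs.
Variables (n k : nat) (lam : nat -> nat).

Definition young_shape : Prop :=
  (forall i, i < k -> lam i <= n - k) /\
  (forall i j, i <= j -> j < k -> lam j <= lam i).

Definition catalan_path (C : {ffun 'I_k -> 'I_(n - k).+1}) : bool :=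
  [forall i : 'I_k, (C i <= lam i)%N] &&
  [forall i : 'I_k, forall j : 'I_k, (i <= j)%N ==> (C j <= C i)%N].

(* extended lambda on horizontal grid lines h = 0..k+1 (1-indexed parts):
   lamx 0 = n-k, lamx h = lambda_h for 1<=h<=k, lamx (k+1) = 0 *)
Definition lamx (h : nat) : nat :=
  if h == 0 then n - k else if h <= k then lam h.-1 else 0.

(* extended path: Cx 0 = n-k, Cx h = C_h for 1<=h<=k, Cx (k+1) = 0 *)
Definition Cx (C : {ffun 'I_k -> 'I_(n - k).+1}) (h : nat) : nat :=
  if h == 0 then n - k else
  if @insub _ (fun m => m < k) 'I_k h.-1 is Some i then (C i : nat) else 0.

(* The west steps on horizontal grid
   line h (h = 0..k) are the unit segments [x-1,x] with Cx (h+1) < x <= Cx h;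
   L contains the segment [x-1,x] on line h iff lamx (h+1) < x <= lamx h. *)
Definition west_on_L (C : {ffun 'I_k -> 'I_(n - k).+1}) : nat :=
  \sum_(0 <= h < k.+1)
    #|[set x : 'I_(n - k).+1 |
        [&& Cx C h.+1 < x, x <= Cx C h, lamx h.+1 < x & x <= lamx h]]|.

Definition south_on_west (C : {ffun 'I_k -> 'I_(n - k).+1}) : nat :=
  #|[set i : 'I_k | (C i : nat) == 0]|.

Definition path_wt (R : fieldType) (a b : R)
    (C : {ffun 'I_k -> 'I_(n - k).+1}) : R :=
  (a * b) ^+ n * (a^-1) ^+ west_on_L C * (b^-1) ^+ south_on_west C.

Definition inY (c : 'I_k * 'I_(n - k)) : bool := (c.2 < lam c.1)%N.

Definition catalan_tableau (T : {ffun 'I_k * 'I_(n - k) -> option bool}) : bool :=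
  [forall c, ~~ inY c ==> (T c == None)] &&
  [forall i : 'I_k, forall j : 'I_(n - k), forall i' : 'I_k,
     ((T (i, j) == Some true) && (i' < i)%N) ==> (T (i', j) == None)] &&
  [forall i : 'I_k, forall j : 'I_(n - k), forall j' : 'I_(n - k),
     ((T (i, j) == Some false) && (j' < j)%N) ==> (T (i, j') == None)] &&
  [forall i : 'I_k, forall j : 'I_(n - k),
     [&& inY (i, j),
         [forall i' : 'I_k, (i < i')%N ==> (T (i', j) != Some true)] &
         [forall j' : 'I_(n - k), (j < j')%N ==> (T (i, j') != Some false)]]
     ==> (T (i, j) != None)].

Definition f_col (T : {ffun 'I_k * 'I_(n - k) -> option bool}) : nat :=
  #|[set j : 'I_(n - k) | [forall i : 'I_k, T (i, j) != Some true]]|.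
Definition f_row (T : {ffun 'I_k * 'I_(n - k) -> option bool}) : nat :=
  #|[set i : 'I_k | [forall j : 'I_(n - k), T (i, j) != Some false]]|.

Definition tab_wt (R : fieldType) (a b : R)
    (T : {ffun 'I_k * 'I_(n - k) -> option bool}) : R :=
  (a * b) ^+ n * (a^-1) ^+ f_col T * (b^-1) ^+ f_row T.

End Defs.

From HB Require Import structures.
From mathcomp Require Import all_boot all_order all_algebra.
From mathcomp Require Import zify.

(* A Catalan path and a Catalan tableau are both encoded by a profile [e] on
   the columns [x < n - k]: for the path, [e x] counts the rows whose south
   step lies right of column [x]; for the tableau, [e x] counts the rows
   holding a beta in some column [>= x].  In both cases [e] is nonincreasing,
   vanishes at [n - k] and is bounded by the column lengths of [Y], and every
   such profile arises from exactly one object.  For tableaux this is because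
   rules (i)-(iii), applied column by column from right to left, leave no
   choice: the boxes of [Y] with no beta to their right receive, from top to
   bottom, empty boxes, at most one alpha and then betas, and the number of betas
   [e x - e (x + 1)] fixes the position of the alpha.  Through the profile,
   rows without beta correspond to south steps on the west border, and columns
   without alpha to columns where [e x] equals the column length of [Y], i.e.
   where the path runs along [L]; hence the weights agree. *)

Definition rank (P : pred nat) (i : nat) : nat := count P (iota 0 i.+1).

Lemma count_iotaS0 (P : pred nat) n :
  count P (iota 0 n.+1) = count P (iota 0 n) + P n.
Proof. by rewrite -addn1 iotaD count_cat /= addn0. Qed.

Lemma count_split_and {T : Type} (a b : pred T) (s : seq T) :
  count a s = count (fun x => a x && b x) s + count (fun x => a x && ~~ b x) s.
Proof. by elim: s => //= x s ->; case: (a x); case: (b x) => /=; lia. Qed.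

Lemma count_predU_disjoint {T : Type} (a b : pred T) (s : seq T) :
  (forall x, ~~ (a x && b x)) ->
  count (fun x => a x || b x) s = count a s + count b s.
Proof.
by move=> ab; elim: s => //= x s ->; move: (ab x); case: (a x); case: (b x) => /=; lia.
Qed.

Lemma count_ltn_iota c m : count (fun x => x < c) (iota 0 m) = minn c m.
Proof.
elim: m => [|m IHm]; first by rewrite minn0.
by rewrite count_iotaS0 IHm /=; lia.
Qed.

Lemma card_ord_pred k (P : pred nat) : #|[set i : 'I_k | P i]| = count P (iota 0 k).
Proof. by rewrite cardsE cardE /enum_mem size_filter -enumT -val_enum_ord count_map. Qed.

Lemma count_iota_sum (P : pred nat) m : count P (iota 0 m) = \sum_(0 <= x < m) (P x : nat).
Proof.
elim: m => [|m IHm]; first by rewrite big_geq.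
by rewrite count_iotaS0 big_nat_recr //= IHm.
Qed.

Lemma sum_nat_eq1 (c : nat -> bool) a m :
  \sum_(0 <= h < m) ((h == a) && c h : nat) = (a < m) && c a.
Proof.
elim: m => [|m IHm]; first by rewrite big_geq.
by rewrite big_nat_recr //= IHm; case: (ltngtP a m) => [am|ma|->] /=;
  rewrite ?ltnSn ?andbT //; lia.
Qed.

Lemma count_iota_leq (P : pred nat) m n : m <= n ->
  count P (iota 0 m) <= count P (iota 0 n).
Proof. by move=> mn; rewrite -(subnKC mn) iotaD count_cat leq_addr. Qed.

Lemma count_iota_downclosed (p : pred nat) k j :
  (forall i j, i <= j -> j < k -> p j -> p i) -> j < k ->
  p j = (j < count p (iota 0 k)).
Proof.
elim: k j => [|k IHk] j p_down // jk; rewrite count_iotaS0.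
case pk: (p k).
  have -> : count p (iota 0 k) = k.
    rewrite -[RHS](size_iota 0) -count_predT; apply: eq_in_count => i.
    by rewrite mem_iota => /andP[_ ik]; apply: (p_down i k) => //; lia.
  by rewrite (p_down j k) //; lia.
case: (ltngtP j k) jk => [jk' _|/=|-> _]; try lia.
  by rewrite IHk ?addn0 // => i l il lk; apply: p_down; lia.
by rewrite pk; have := count_size p (iota 0 k); rewrite size_iota; lia.
Qed.

Lemma count_and_leq (P : pred nat) a k : a < k ->
  count (fun i => P i && (i <= a)) (iota 0 k) = rank P a.
Proof.
move=> ak; rewrite -(subnKC ak) iotaD count_cat (eq_in_count (a2 := P)); last first.
  by move=> i; rewrite mem_iota /= => iak; rewrite (_ : i <= a) ?andbT //; lia.
rewrite (eq_in_count (a2 := pred0) (s := iota (0 + a.+1) _)) ?count_pred0 ?addn0 // => i.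
by rewrite mem_iota => ai; rewrite (_ : i <= a = false) ?andbF //; lia.
Qed.

Section Rank.
Variable P : pred nat.

Lemma rank_pos i : P i -> 0 < rank P i.
Proof. by move=> Pi; rewrite /rank count_iotaS0 Pi addn1. Qed.

Lemma rank_leq {i j} : i <= j -> rank P i <= rank P j.
Proof. by move=> ij; apply: count_iota_leq. Qed.

Lemma rank_ltn i j : i < j -> P j -> rank P i < rank P j.
Proof.
by move=> ij Pj; rewrite [rank P j]/rank count_iotaS0 Pj addn1 ltnS; apply: count_iota_leq.
Qed.

Lemma rank_ltnE i j : P i -> P j -> (rank P i < rank P j) = (i < j).
Proof.
move=> Pi Pj; case: (ltnP i j) => ij; first exact: rank_ltn.
by rewrite ltnNge (rank_leq ij).
Qed.

Lemma rank_inj i j : P i -> P j -> (rank P i == rank P j) = (i == j).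
Proof.
move=> Pi Pj; case: (ltngtP i j) => [ij|ji|->]; last by rewrite eqxx.
- by rewrite ltn_eqF // rank_ltn.
- by rewrite gtn_eqF // rank_ltn.
Qed.

Lemma rank_surj m n : 0 < m -> m <= count P (iota 0 n) ->
  exists j, [/\ j < n, P j & rank P j = m].
Proof.
move=> m0; elim: n => [|n IHn]; first by rewrite /=; lia.
case: (leqP m (count P (iota 0 n))) => [/IHn [j [jn Pj rj]] _|mn].
  by exists j; split => //; lia.
rewrite count_iotaS0 => mSn; have Pn : P n by case: (P n) mSn mn => /=; lia.
by exists n; split => //; rewrite /rank count_iotaS0 Pn; lia.
Qed.

Lemma count_rank_leq m n :
  count (fun i => P i && (rank P i <= m)) (iota 0 n) = minn m (count P (iota 0 n)).
Proof.
elim: n => [|n IHn]; first by rewrite minn0.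
by rewrite !count_iotaS0 IHn /rank count_iotaS0; case: (P n) => /=; lia.
Qed.

Lemma count_rank_gtn m n :
  count (fun i => P i && (m < rank P i)) (iota 0 n) = count P (iota 0 n) - m.
Proof.
rewrite (eq_count (a2 := fun i => P i && ~~ (rank P i <= m))); last by move=> i; rewrite ltnNge.
have := count_split_and P (fun i => rank P i <= m) (iota 0 n).
by rewrite count_rank_leq; lia.
Qed.

End Rank.

Definition column_fill (U : pred nat) (m i : nat) : option bool :=
  if U i then (if rank U i < m then None else Some (rank U i == m)) else None.

Section ColumnFill.
Variables (U : pred nat) (m : nat).

Lemma column_fill_alpha i : (column_fill U m i == Some true) = U i && (rank U i == m).
Proof. by rewrite /column_fill; case: (U i) => //; case: ltngtP. Qed.

Lemma column_fill_beta i : (column_fill U m i == Some false) = U i && (m < rank U i).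
Proof. by rewrite /column_fill; case: (U i) => //; case: ltngtP. Qed.

End ColumnFill.

Section ColumnDetermined.
Variables (k : nat) (U : pred nat) (c : nat -> option bool).
Hypothesis U_bound : forall i, U i -> i < k.
Hypothesis c_support : forall i, c i != None -> U i.
Hypothesis c_above_alpha : forall i i', c i = Some true -> i' < i -> c i' = None.
Hypothesis c_filled : forall i, U i ->
  (forall i', i < i' -> c i' != Some true) -> c i != None.

Let betas := count (fun i => c i == Some false) (iota 0 k).

Let c_outside i : ~~ U i -> c i = None.
Proof. by move=> Ui; apply/eqP; apply: contraR Ui; apply: c_support. Qed.

Lemma column_with_alpha a : c a = Some true ->
  c =1 column_fill U (rank U a).
Proof.
move=> ca; have Ua : U a by apply: c_support; rewrite ca.
have c_shape i : U i -> c i = if i < a then None else Some (i == a).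
  move=> Ui; case: ltngtP => [ia|ai|->] //; first exact: c_above_alpha _ _ ca ia.
  have : c i != None.
    apply: c_filled => // i' ii'; apply/negP => /eqP ci'.
    by have := c_above_alpha _ _ ci' (ltn_trans ai ii'); rewrite ca.
  case ci: (c i) => [[]|] // _.
  by have := c_above_alpha _ _ ci ai; rewrite ca.
move=> i; rewrite /column_fill; case: (boolP (U i)) => [Ui|/c_outside //].
by rewrite c_shape // rank_ltnE // rank_inj.
Qed.

Lemma column_without_alpha : (forall a, c a != Some true) ->
  c =1 column_fill U 0.
Proof.
move=> no_alpha i; rewrite /column_fill; case: (boolP (U i)) => [Ui|/c_outside //].
have := c_filled _ Ui (fun i' _ => no_alpha i'); have := no_alpha i.
by case: (c i) => [[]|] //; rewrite ltn0 eq_sym (gtn_eqF (rank_pos _ _ Ui)).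
Qed.

Lemma column_determined : c =1 column_fill U (count U (iota 0 k) - betas).
Proof.
case: (boolP [exists a : 'I_k, c a == Some true]) => [/existsP [a /eqP ca]|no_alpha].
  have Ua : U a by apply: c_support; rewrite ca.
  have betasE : betas = count U (iota 0 k) - rank U a.
    rewrite (count_split_and U (fun i => i <= a)) count_and_leq // addKn.
    apply: eq_count => i; rewrite (column_with_alpha _ ca) column_fill_beta.
    by case: (boolP (U i)) => //= Ui; rewrite rank_ltnE // ltnNge.
  rewrite betasE subKn; first exact: column_with_alpha.
  exact: count_iota_leq.
have {}no_alpha a : c a != Some true.
  apply/negP => /eqP ca; have ak : a < k by apply/U_bound/c_support; rewrite ca.
  by move/existsPn: no_alpha => /(_ (Ordinal ak)); rewrite ca.
have -> : betas = count U (iota 0 k).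
  apply: eq_count => i; rewrite (column_without_alpha no_alpha) column_fill_beta.
  by case: (boolP (U i)) => //= /rank_pos.
by rewrite subnn; apply: column_without_alpha.
Qed.

End ColumnDetermined.

Definition beta_from (N : nat) (T : nat -> nat -> option bool) (x i : nat) : bool :=
  has (fun y => (x <= y) && (T i y == Some false)) (iota 0 N).

Definition beta_profile (N k : nat) (T : nat -> nat -> option bool) (x : nat) : nat :=
  count (beta_from N T x) (iota 0 k).

Section BetaProfile.
Variables (N k : nat) (T : nat -> nat -> option bool).

Lemma beta_fromS x i : x < N ->
  beta_from N T x i = beta_from N T x.+1 i || (T i x == Some false).
Proof.
move=> xN; apply/idP/idP => [/hasP [y] | /orP[/hasP [y y_iota /andP[xy beta_y]] | beta_x]].
- rewrite mem_iota => /andP[_ yN] /andP[]; rewrite leq_eqVlt => /orP[/eqP<-|xy] beta_y.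
    by rewrite beta_y orbT.
  by apply/orP; left; apply/hasP; exists y; rewrite ?mem_iota ?xy.
- by apply/hasP; exists y; rewrite ?beta_y ?andbT // ltnW.
- by apply/hasP; exists x; rewrite ?mem_iota ?leqnn.
Qed.

Lemma beta_profile_decr x : beta_profile N k T x.+1 <= beta_profile N k T x.
Proof.
apply: sub_count => i /hasP [y y_iota /andP[xy beta_y]].
by apply/hasP; exists y; rewrite ?beta_y ?andbT // ltnW.
Qed.

Lemma beta_profile_N : beta_profile N k T N = 0.
Proof.
rewrite /beta_profile (eq_count (a2 := pred0)) ?count_pred0 // => i.
by apply/hasP => -[y]; rewrite mem_iota => /andP[_ yN]; rewrite leqNgt yN.
Qed.

End BetaProfile.

Section Filling.
Variables (N k : nat) (lam : nat -> nat) (e : nat -> nat).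

Definition col_len (x : nat) : nat := count (fun i => x < lam i) (iota 0 k).

(* Columns are filled from right to left, stage [d] filling column [N - d.+1];
   [beta_right d] marks the rows that already received a beta.  The position
   [alpha_rank d] of the alpha among the free rows is chosen so that column
   [x] receives [e x - e x.+1] betas. *)
Definition alpha_rank (d : nat) : nat := col_len (N - d.+1) - e (N - d.+1).

Fixpoint beta_right (d : nat) : pred nat :=
  if d is d'.+1 then
    let free i := [&& i < k, N - d'.+1 < lam i & ~~ beta_right d' i] in
    fun i => beta_right d' i || free i && (alpha_rank d' < rank free i)
  else xpred0.

Definition free_row (d i : nat) : bool := [&& i < k, N - d.+1 < lam i & ~~ beta_right d i].

Definition cell (d : nat) : nat -> option bool := column_fill (free_row d) (alpha_rank d).

Definition filling (i x : nat) : option bool := cell (N - x.+1) i.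

Lemma beta_rightS d i : beta_right d.+1 i = beta_right d i || (cell d i == Some false).
Proof. by rewrite column_fill_beta. Qed.

Lemma beta_rightP d i :
  reflect (exists2 d0, d0 < d & cell d0 i = Some false) (beta_right d i).
Proof.
elim: d => [|d IHd]; first by constructor => -[].
rewrite beta_rightS; apply: (iffP orP) => [[/IHd [d0 d0d c0]|/eqP cd]|[d0]].
- by exists d0 => //; apply: ltnW.
- by exists d.
rewrite ltnS leq_eqVlt => /orP[/eqP->|d0d] c0; first by right; rewrite c0.
by left; apply/IHd; exists d0.
Qed.

Lemma beta_right_box d i : beta_right d i -> (i < k) && (N - d < lam i).
Proof.
case/beta_rightP => d0 d0d /eqP; rewrite column_fill_beta => /andP[/and3P[-> lt_lam _] _].
by apply: leq_ltn_trans lt_lam; lia.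
Qed.

Hypothesis e_decr : forall x, e x.+1 <= e x.
Hypothesis e_N : e N = 0.
Hypothesis e_col_len : forall x, x < N -> e x <= col_len x.

Lemma count_free_row_of_beta_right d : d < N ->
  count (beta_right d) (iota 0 k) = e (N - d) ->
  count (free_row d) (iota 0 k) = col_len (N - d.+1) - e (N - d).
Proof.
move=> dN count_beta.
rewrite /col_len [count (fun i => _ < lam i) _](count_split_and _ (beta_right d)) -count_beta.
have -> : count (fun i => (N - d.+1 < lam i) && beta_right d i) (iota 0 k) =
          count (beta_right d) (iota 0 k).
  apply: eq_count => i; case: (boolP (beta_right d i)) => [/beta_right_box|]; last by rewrite andbF.
  by case/andP => _ lt_lam; rewrite andbT; apply: leq_ltn_trans lt_lam; lia.
rewrite addKn; apply: eq_in_count => i; rewrite mem_iota => /andP[_ ik].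
by rewrite /free_row ik.
Qed.

Lemma count_beta_right d : d <= N -> count (beta_right d) (iota 0 k) = e (N - d).
Proof.
elim: d => [|d IHd] dN; first by rewrite subn0 e_N; elim: (iota 0 k).
have count_beta := IHd (ltnW dN).
have count_fr := count_free_row_of_beta_right _ dN count_beta.
have Nd : N - d = (N - d.+1).+1 by lia.
rewrite (eq_count (beta_rightS d)) count_predU_disjoint; last first.
  by move=> i; rewrite column_fill_beta /free_row; case: (beta_right d i); rewrite ?andbF.
rewrite count_beta (eq_count (column_fill_beta _ _)) count_rank_gtn count_fr /alpha_rank Nd.
have lt_N : N - d.+1 < N by lia.
by have := e_decr (N - d.+1); have := e_col_len _ lt_N; lia.
Qed.

Lemma count_free_row d : d < N ->
  count (free_row d) (iota 0 k) = col_len (N - d.+1) - e (N - d).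
Proof. by move=> dN; apply/count_free_row_of_beta_right/count_beta_right => //; apply: ltnW. Qed.

Lemma alpha_rank_le d : d < N -> alpha_rank d <= count (free_row d) (iota 0 k).
Proof.
move=> dN; rewrite count_free_row // /alpha_rank (_ : N - d = (N - d.+1).+1); last lia.
by have := e_decr (N - d.+1); lia.
Qed.

Lemma filling_outside i x : x < N -> ~~ (x < lam i) -> filling i x = None.
Proof.
move=> xN lam_x; rewrite /filling /cell /column_fill /free_row.
by rewrite (_ : N - (N - x.+1).+1 = x) ?(negbTE lam_x) ?andbF //; lia.
Qed.

Lemma filling_above_alpha i i' x :
  filling i x = Some true -> i' < i -> filling i' x = None.
Proof.
rewrite /filling /cell => /eqP; rewrite column_fill_alpha => /andP[Ui /eqP rank_i] i'i.
rewrite /column_fill; case: ifP => // Ui'.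
by rewrite -rank_i rank_ltn.
Qed.

Lemma filling_left_beta i x x' :
  x < N -> filling i x = Some false -> x' < x -> filling i x' = None.
Proof.
move=> xN beta_x x'x; have : beta_right (N - x'.+1) i.
  by apply/beta_rightP; exists (N - x.+1) => //; lia.
by rewrite /filling /cell /column_fill /free_row => ->; rewrite !andbF.
Qed.

Lemma filling_beta_rightP i x : x <= N ->
  reflect (exists2 y, x <= y < N & filling i y = Some false) (beta_right (N - x) i).
Proof.
move=> xN; apply: (iffP (beta_rightP _ _)) => [[d0 d0x c0]|[y /andP[xy yN] beta_y]].
  by exists (N - d0.+1); [lia | rewrite /filling (_ : N - (N - d0.+1).+1 = d0) //; lia].
by exists (N - y.+1) => //; lia.
Qed.

Lemma filling_complete i x : i < k -> x < N -> x < lam i ->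
  (forall i', i < i' -> i' < k -> filling i' x != Some true) ->
  (forall x', x < x' -> x' < N -> filling i x' != Some false) ->
  filling i x != None.
Proof.
move=> ik xN lam_x no_alpha_below no_beta_right; set d := N - x.+1.
have dN : d < N by rewrite /d; lia.
case: (boolP (beta_right d i)) => [|not_beta].
  case/(filling_beta_rightP _ _ xN) => y /andP[xy yN] beta_y.
  by have := no_beta_right y xy yN; rewrite beta_y.
have Ui : free_row d i by rewrite /free_row ik not_beta (_ : N - d.+1 = x) ?lam_x //; lia.
rewrite /filling -/d /cell /column_fill Ui; case: ltnP => // lt_alpha.
have [j [jk Uj rank_j]] :=
  rank_surj _ _ _ (ltn_trans (rank_pos _ _ Ui) lt_alpha) (alpha_rank_le _ dN).
have ij : i < j by rewrite -(rank_ltnE _ _ _ Ui Uj) rank_j.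
by have := no_alpha_below j ij jk; rewrite /filling -/d /cell column_fill_alpha Uj rank_j eqxx.
Qed.

Lemma beta_profile_filling x : x <= N -> beta_profile N k filling x = e x.
Proof.
move=> xN; rewrite -[in RHS](_ : N - (N - x) = x); last lia.
rewrite -count_beta_right ?leq_subr //; apply: eq_count => i.
apply/hasP/(filling_beta_rightP _ _ xN) => [[y] | [y /andP[xy yN] beta_y]].
  by rewrite mem_iota => /andP[_ yN] /andP[xy /eqP beta_y]; exists y; rewrite ?xy.
by exists y; rewrite ?mem_iota ?xy ?beta_y.
Qed.

Lemma filling_alpha_colP x : x < N ->
  reflect (exists2 i, i < k & filling i x = Some true) (e x < col_len x).
Proof.
move=> xN; set d := N - x.+1; have dN : d < N by rewrite /d; lia.
have alphaE : alpha_rank d = col_len x - e x.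
  by rewrite /alpha_rank /d (_ : N - (N - x.+1).+1 = x) //; lia.
apply: (iffP idP) => [lt_e|[i ik /eqP]]; last first.
  rewrite /filling -/d /cell column_fill_alpha => /andP[Ui /eqP rank_i].
  by have := rank_pos _ _ Ui; rewrite rank_i alphaE; lia.
have [|j [jk Uj rank_j]] := rank_surj _ _ _ _ (alpha_rank_le _ dN); first by rewrite alphaE; lia.
by exists j => //; apply/eqP; rewrite /filling -/d /cell column_fill_alpha Uj rank_j eqxx.
Qed.

End Filling.

Lemma eq_filling N k lam e1 e2 : e1 =1 e2 -> filling N k lam e1 =2 filling N k lam e2.
Proof.
move=> e12; have alpha12 d : alpha_rank N k lam e1 d = alpha_rank N k lam e2 d.
  by rewrite /alpha_rank e12.
have beta12 d : beta_right N k lam e1 d =1 beta_right N k lam e2 d.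
  elim: d => [//|d IHd] i; rewrite /= alpha12 IHd; congr (_ || _ && (_ < _)).
  by apply: eq_count => j; rewrite IHd.
have free12 d : free_row N k lam e1 d =1 free_row N k lam e2 d.
  by move=> i; rewrite /free_row beta12.
by move=> i x; rewrite /filling /cell /column_fill free12 alpha12 /rank (eq_count (free12 _)).
Qed.

Section Rigidity.
Variables (N k : nat) (lam : nat -> nat) (T : nat -> nat -> option bool).
Hypothesis T_support : forall {i x}, T i x != None -> [&& i < k, x < N & x < lam i].
Hypothesis T_above_alpha : forall {i i' x}, T i x = Some true -> i' < i -> T i' x = None.
Hypothesis T_left_beta : forall {i x x'}, T i x = Some false -> x' < x -> T i x' = None.
Hypothesis T_filled : forall i x, i < k -> x < N -> x < lam i ->
  (forall i', i < i' -> T i' x != Some true) ->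
  (forall x', x < x' -> T i x' != Some false) -> T i x != None.

Local Notation e := (beta_profile N k T).

Lemma beta_profile_col_len x : e x <= col_len k lam x.
Proof.
apply: sub_count => i /hasP [y _ /andP[xy /eqP beta_y]].
have /T_support/and3P[_ _ lam_y] : T i y != None by rewrite beta_y.
exact: leq_ltn_trans lam_y.
Qed.

Lemma beta_profileS x : x < N ->
  e x = e x.+1 + count (fun i => T i x == Some false) (iota 0 k).
Proof.
move=> xN; rewrite /beta_profile (eq_count (fun i => beta_fromS _ _ _ i xN)).
rewrite count_predU_disjoint // => i.
apply/negP => /andP[/hasP [y _ /andP[xy /eqP beta_y]] /eqP beta_x].
by have := T_left_beta beta_y xy; rewrite beta_x.
Qed.

Section Column.
Variable d : nat.
Hypothesis dN : d < N.
Hypothesis beta_right_from : beta_right N k lam e d =1 beta_from N T (N - d).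

Let x := N - d.+1.
Let Nd : N - d = x.+1. Proof. by rewrite /x; lia. Qed.
Let U := free_row N k lam e d.

Let U_support i : T i x != None -> U i.
Proof.
move=> Tix; case/and3P: (T_support Tix) => ik _ lam_x.
rewrite /U /free_row ik lam_x beta_right_from Nd /=.
apply/hasP => -[y _ /andP[xy /eqP beta_y]].
by move: Tix; rewrite (T_left_beta beta_y xy).
Qed.

Let U_filled i : U i -> (forall i', i < i' -> T i' x != Some true) -> T i x != None.
Proof.
rewrite /U /free_row beta_right_from Nd => /and3P[ik lam_x not_beta] no_alpha.
apply: T_filled => // [|x' xx']; first by rewrite /x; lia.
apply/eqP => beta_x'; have /T_support/and3P[_ x'N _] : T i x' != None by rewrite beta_x'.
by move/hasP: not_beta; apply; exists x'; rewrite ?mem_iota ?xx' ?beta_x'.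
Qed.

Lemma cell_beta_profile : cell N k lam e d =1 (fun i => T i x).
Proof.
have U_bound i : U i -> i < k by case/and3P.
move=> i; rewrite (@column_determined k U (fun i => T i x) U_bound U_support
  (fun _ _ => T_above_alpha) U_filled).
have xN : x < N by rewrite /x; lia.
have count_U : count U (iota 0 k) = col_len k lam x - e x.+1.
  rewrite -Nd; apply: count_free_row dN; [exact: beta_profile_decr | exact: beta_profile_N |].
  by move=> y _; apply: beta_profile_col_len.
by rewrite /cell /alpha_rank -/x count_U (beta_profileS _ xN) subnDA.
Qed.
End Column.

Lemma beta_right_profile d : d <= N -> beta_right N k lam e d =1 beta_from N T (N - d).
Proof.
elim: d => [|d IHd] dN i.
  by rewrite subn0; apply/esym/hasP => -[y]; rewrite mem_iota => /andP[_ yN]; rewrite leqNgt yN.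
rewrite beta_rightS (cell_beta_profile _ dN (IHd (ltnW dN))) IHd ?(ltnW dN) //.
have lt_N : N - d.+1 < N by lia.
by rewrite (beta_fromS _ _ _ _ lt_N) (_ : (N - d.+1).+1 = N - d) //; lia.
Qed.

Lemma filling_beta_profile i x : x < N -> T i x = filling N k lam e i x.
Proof.
move=> xN; have dN : N - x.+1 < N by lia.
have Nx : N - (N - x.+1).+1 = x by lia.
by rewrite /filling (cell_beta_profile _ dN) ?Nx //; apply/beta_right_profile/leq_subr.
Qed.

End Rigidity.

Section CatalanObjects.
Variables (n k : nat) (lam : nat -> nat).
Local Notation N := (n - k).
Hypothesis lam_antitone : forall {i j}, i <= j -> j < k -> lam j <= lam i.

Lemma Cx_ord (C : {ffun 'I_k -> 'I_N.+1}) (i : 'I_k) : Cx n k C i.+1 = C i.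
Proof. by rewrite /Cx /= valK. Qed.

Lemma Cx_out (C : {ffun 'I_k -> 'I_N.+1}) i : k <= i -> Cx n k C i.+1 = 0.
Proof. by move=> ki; rewrite /Cx /= insubF // ltnNge ki. Qed.

Lemma Cx_le (C : {ffun 'I_k -> 'I_N.+1}) h : Cx n k C h <= N.
Proof. by rewrite /Cx; case: eqP => // _; case: insub => // i; rewrite -ltnS. Qed.

Definition path_profile (C : {ffun 'I_k -> 'I_N.+1}) (x : nat) : nat :=
  count (fun i => x < Cx n k C i.+1) (iota 0 k).

Definition tab_fun (T : {ffun 'I_k * 'I_N -> option bool}) (i x : nat) : option bool :=
  match @insub _ (fun m => m < k) 'I_k i, @insub _ (fun m => m < N) 'I_N x with
  | Some i', Some x' => T (i', x')
  | _, _ => None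
  end.

Lemma tab_funE T {i x} (ik : i < k) (xN : x < N) : tab_fun T i x = T (Ordinal ik, Ordinal xN).
Proof. by rewrite /tab_fun (insubT (fun m => m < k) ik) (insubT (fun m => m < N) xN). Qed.

Lemma tab_fun_ord T (i : 'I_k) (x : 'I_N) : tab_fun T i x = T (i, x).
Proof. by rewrite /tab_fun !valK. Qed.

Lemma tab_fun_support T {i x} : tab_fun T i x != None -> (i < k) && (x < N).
Proof.
by rewrite /tab_fun; case: insubP => [i' _ <-|//]; case: insubP => [x' _ <-|//]; rewrite !ltn_ord.
Qed.

Section Tableau.
Variable T : {ffun 'I_k * 'I_N -> option bool}.
Hypothesis T_tab : catalan_tableau n k lam T.
Local Notation t := (tab_fun T).

Lemma tab_support i x : t i x != None -> [&& i < k, x < N & x < lam i].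
Proof.
move=> Tix; case/andP: (tab_fun_support _ Tix) => ik xN; rewrite ik xN /=.
move: Tix; rewrite (tab_funE _ ik xN); apply: contraTT => lam_x.
case/andP: T_tab => /andP[/andP[/forallP in_Y _] _] _.
by rewrite negbK; apply: (implyP (in_Y (Ordinal ik, Ordinal xN))).
Qed.

Lemma tab_above_alpha i i' x : t i x = Some true -> i' < i -> t i' x = None.
Proof.
move=> alpha_ix i'i; have /tab_support/and3P[ik xN _] : t i x != None by rewrite alpha_ix.
have i'k : i' < k by apply: ltn_trans ik.
case/andP: T_tab => /andP[/andP[_ /forallP rule_i] _] _.
move: alpha_ix; rewrite (tab_funE _ ik xN) (tab_funE _ i'k xN) => alpha_ix; apply/eqP.
move/forallP/(_ (Ordinal xN))/forallP/(_ (Ordinal i'k))/implyP: (rule_i (Ordinal ik)).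
by apply; rewrite alpha_ix.
Qed.

Lemma tab_left_beta i x x' : t i x = Some false -> x' < x -> t i x' = None.
Proof.
move=> beta_ix x'x; have /tab_support/and3P[ik xN _] : t i x != None by rewrite beta_ix.
have x'N : x' < N by apply: ltn_trans xN.
case/andP: T_tab => /andP[_ /forallP rule_ii] _.
move: beta_ix; rewrite (tab_funE _ ik xN) (tab_funE _ ik x'N) => beta_ix; apply/eqP.
move/forallP/(_ (Ordinal xN))/forallP/(_ (Ordinal x'N))/implyP: (rule_ii (Ordinal ik)).
by apply; rewrite beta_ix.
Qed.

Lemma tab_filled i x : i < k -> x < N -> x < lam i ->
  (forall i', i < i' -> t i' x != Some true) ->
  (forall x', x < x' -> t i x' != Some false) -> t i x != None.
Proof.
move=> ik xN lam_x no_alpha no_beta; case/andP: T_tab => _ /forallP rule_iii.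
move/forallP/(_ (Ordinal xN))/implyP: (rule_iii (Ordinal ik)); rewrite (tab_funE _ ik xN); apply.
apply/and3P; split=> //; apply/forallP.
  by move=> i'; apply/implyP => ii'; rewrite -(tab_fun_ord T i' (Ordinal xN)); apply: no_alpha.
by move=> x'; apply/implyP => xx'; rewrite -(tab_fun_ord T (Ordinal ik) x'); apply: no_beta.
Qed.

Lemma tab_fun_filling i x : x < N -> t i x = filling N k lam (beta_profile N k t) i x.
Proof.
exact: (filling_beta_profile _ _ _ _ tab_support tab_above_alpha tab_left_beta tab_filled).
Qed.

End Tableau.

Definition path_of_profile (e : nat -> nat) : {ffun 'I_k -> 'I_N.+1} :=
  [ffun i : 'I_k => inord (count (fun x => i < e x) (iota 0 N))].

Definition tableau_of_profile (e : nat -> nat) : {ffun 'I_k * 'I_N -> option bool} :=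
  [ffun c : 'I_k * 'I_N => filling N k lam e c.1 c.2].

Lemma Cx_path_of_profile e i : i < k ->
  Cx n k (path_of_profile e) i.+1 = count (fun x => i < e x) (iota 0 N).
Proof.
move=> ik; rewrite (Cx_ord _ (Ordinal ik)) ffunE inordK //.
by rewrite ltnS -[N in _ <= N](size_iota 0) count_size.
Qed.

Lemma path_of_profile_eq_in e1 e2 : {in gtn N, e1 =1 e2} ->
  path_of_profile e1 = path_of_profile e2.
Proof.
move=> e12; apply/ffunP => i; rewrite !ffunE; congr inord.
by apply: eq_in_count => x; rewrite mem_iota => /andP[_ xN]; rewrite e12.
Qed.

Lemma f_row_beta_profile T : f_row n k T = k - beta_profile N k (tab_fun T) 0.
Proof.
rewrite /f_row (_ : #|_| = count (predC (beta_from N (tab_fun T) 0)) (iota 0 k)).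
  have := count_predC (beta_from N (tab_fun T) 0) (iota 0 k).
  by rewrite size_iota /beta_profile; lia.
rewrite -card_ord_pred; apply: eq_card => i; rewrite !inE.
apply/forallP/hasPn => [no_beta y | no_beta x].
  rewrite mem_iota => /andP[_ yN].
  by have := no_beta (Ordinal yN); rewrite -tab_fun_ord /=; case: eqP.
by have := no_beta x; rewrite mem_iota ltn_ord tab_fun_ord /=; case: eqP => // _; apply.
Qed.

Section Profile.
Variable e : nat -> nat.
Hypothesis e_decr : forall x, e x.+1 <= e x.
Hypothesis e_N : e N = 0.
Hypothesis e_col_len : forall x, x < N -> e x <= col_len k lam x.

Lemma profile_antitone x y : x <= y -> e y <= e x.
Proof.
move: x y; apply: (homo_leq (r := fun a b => b <= a)) e_decr => [//|a b c ab bc].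
exact: leq_trans bc ab.
Qed.

Lemma profile_out x : N <= x -> e x = 0.
Proof. by move=> Nx; apply/eqP; rewrite -leqn0 -e_N profile_antitone. Qed.

Lemma profile_le x : e x <= k.
Proof.
case: (ltnP x N) => [xN|/(profile_out _) ->//].
apply: leq_trans (e_col_len _ xN) _; by rewrite -[k in _ <= k](size_iota 0) count_size.
Qed.

Lemma profileE x i : x < N -> (i < e x) = (x < count (fun y => i < e y) (iota 0 N)).
Proof.
move=> xN; apply: (count_iota_downclosed (fun y => i < e y)) => // y z yz _ /= lt_e.
exact: leq_trans lt_e (profile_antitone _ _ yz).
Qed.

Lemma path_of_profile_path : catalan_path n k lam (path_of_profile e).
Proof.
apply/andP; split; apply/forallP => i.
  rewrite -Cx_ord Cx_path_of_profile //.
  apply: leq_trans (_ : count (fun x => x < lam i) (iota 0 N) <= _); last first.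
    by rewrite count_ltn_iota geq_minl.
  apply: sub_count => x /= lt_e.
  have xN : x < N by rewrite ltnNge; apply: contraTN lt_e => /(profile_out _) ->.
  have lam_down i1 i2 : i1 <= i2 -> i2 < k -> x < lam i2 -> x < lam i1.
    by move=> i12 i2k lt_lam; apply: leq_trans lt_lam (lam_antitone i12 i2k).
  have := count_iota_downclosed (fun j => x < lam j) _ _ lam_down (ltn_ord i); rewrite /= => ->.
  exact: leq_trans lt_e (e_col_len _ xN).
apply/forallP => j; apply/implyP => ij; rewrite -!Cx_ord !Cx_path_of_profile //.
by apply: sub_count => x /=; apply: leq_ltn_trans.
Qed.

Lemma path_profile_of_profile x : path_profile (path_of_profile e) x = e x.
Proof.
rewrite /path_profile (eq_in_count (a2 := fun i => i < e x)).
  by rewrite count_ltn_iota; apply/minn_idPl/profile_le.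
move=> i; rewrite mem_iota => /andP[_ ik]; rewrite Cx_path_of_profile //.
case: (ltnP x N) => [xN|Nx]; first by rewrite profileE.
rewrite profile_out // ltn0; apply/negbTE; rewrite -leqNgt.
by apply: leq_trans Nx; rewrite -[N in _ <= N](size_iota 0) count_size.
Qed.

Lemma tab_fun_tableau_of_profile i x : i < k -> x < N ->
  tab_fun (tableau_of_profile e) i x = filling N k lam e i x.
Proof. by move=> ik xN; rewrite (tab_funE _ ik xN) ffunE. Qed.

Lemma tableau_of_profile_tableau : catalan_tableau n k lam (tableau_of_profile e).
Proof.
rewrite /catalan_tableau -!andbA; apply/and4P; split.
- apply/forallP => -[i x]; apply/implyP => not_in_Y; rewrite ffunE.
  by apply/eqP/filling_outside.
- apply/forallP => i; apply/forallP => x; apply/forallP => i'; apply/implyP.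
  by rewrite !ffunE => /andP[/eqP alpha_ix i'i]; apply/eqP; apply: filling_above_alpha alpha_ix i'i.
- apply/forallP => i; apply/forallP => x; apply/forallP => x'; apply/implyP.
  by rewrite !ffunE => /andP[/eqP beta_ix x'x]; apply/eqP; apply: filling_left_beta beta_ix x'x.
- apply/forallP => i; apply/forallP => x; apply/implyP.
  case/and3P => in_Y /forallP no_alpha /forallP no_beta.
  rewrite ffunE; apply: filling_complete => //.
  + by move=> i' ii' i'k; move/implyP: (no_alpha (Ordinal i'k)); rewrite ffunE; apply.
  + by move=> x' xx' x'N; move/implyP: (no_beta (Ordinal x'N)); rewrite ffunE; apply.
Qed.

Lemma beta_profile_tableau_of_profile x : x <= N ->
  beta_profile N k (tab_fun (tableau_of_profile e)) x = e x.
Proof.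
move=> xN; rewrite -[RHS](beta_profile_filling _ _ _ _ e_decr e_N e_col_len _ xN).
apply: eq_in_count => i; rewrite mem_iota => /andP[_ ik]; apply: eq_in_has => y.
by rewrite mem_iota => /andP[_ yN]; rewrite tab_fun_tableau_of_profile.
Qed.

Lemma f_col_tableau_of_profile :
  f_col n k (tableau_of_profile e) = count (fun x => e x == col_len k lam x) (iota 0 N).
Proof.
rewrite /f_col -card_ord_pred; apply: eq_card => x; rewrite !inE eqn_leq e_col_len //=.
apply/forallP/idP => [no_alpha | /[swap] i]; last first.
  rewrite leqNgt ffunE => /negP not_lt; apply/eqP => alpha_ix; apply: not_lt.
  by apply/(filling_alpha_colP _ _ _ _ e_decr e_N e_col_len _ (ltn_ord x)); exists i.
rewrite leqNgt; apply/negP => /(filling_alpha_colP _ _ _ _ e_decr e_N e_col_len _ (ltn_ord x)).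
by case=> i ik alpha_ix; have := no_alpha (Ordinal ik); rewrite ffunE alpha_ix.
Qed.

End Profile.

Lemma south_on_west_path_profile C : south_on_west n k C = k - path_profile C 0.
Proof.
rewrite /south_on_west (_ : #|_| = count (predC (fun i => 0 < Cx n k C i.+1)) (iota 0 k)).
  have := count_predC (fun i => 0 < Cx n k C i.+1) (iota 0 k).
  by rewrite size_iota /path_profile; lia.
by rewrite -card_ord_pred; apply: eq_card => i; rewrite !inE Cx_ord /= lt0n negbK.
Qed.

Lemma lamx_ge X h : 0 < X <= N -> (X <= lamx n k lam h) = (h <= col_len k lam X.-1).
Proof.
case/andP=> X0 XN; rewrite /lamx; case: h => [|h] /=; first by rewrite XN.
case: (ltnP h k) => hk.
  rewrite /col_len -(count_iota_downclosed (fun j => X.-1 < lam j)) //=; first lia.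
  by move=> i j ij jk /= lt_lam; apply: leq_trans lt_lam (lam_antitone ij jk).
by have := count_size (fun i => X.-1 < lam i) (iota 0 k); rewrite size_iota /col_len; lia.
Qed.

Section Path.
Variable C : {ffun 'I_k -> 'I_N.+1}.
Hypothesis C_path : catalan_path n k lam C.
Local Notation e := (path_profile C).

Lemma Cx_lam i : i < k -> Cx n k C i.+1 <= lam i.
Proof.
by case/andP: C_path => /forallP C_lam _ ik; have := C_lam (Ordinal ik); rewrite -Cx_ord.
Qed.

Lemma Cx_antitone i j : i <= j -> j < k -> Cx n k C j.+1 <= Cx n k C i.+1.
Proof.
case/andP: C_path => _ /forallP C_decr ij jk; have ik : i < k by apply: leq_ltn_trans jk.
move/forallP/(_ (Ordinal jk))/implyP/(_ ij): (C_decr (Ordinal ik)).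
by rewrite -!Cx_ord.
Qed.

Lemma path_profile_decr x : e x.+1 <= e x.
Proof. by apply: sub_count => i /ltnW. Qed.

Lemma path_profile_N : e N = 0.
Proof.
rewrite /path_profile (eq_count (a2 := pred0)) ?count_pred0 // => i /=.
by rewrite ltnNge Cx_le.
Qed.

Lemma path_profile_col_len x : e x <= col_len k lam x.
Proof.
apply: sub_count => i /= lt_C; case: (ltnP i k) => ik.
  exact: leq_trans lt_C (Cx_lam _ ik).
by move: lt_C; rewrite Cx_out.
Qed.

Lemma path_profileE x i : i < k -> (x < Cx n k C i.+1) = (i < e x).
Proof.
move=> ik; apply: (count_iota_downclosed (fun j => x < Cx n k C j.+1)) => // i' j i'j jk /= lt_C.
exact: leq_trans lt_C (Cx_antitone _ _ i'j jk).
Qed.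

Lemma path_profile_le x : e x <= k.
Proof. by rewrite -[k in _ <= k](size_iota 0) count_size. Qed.

Lemma path_of_profile_path_profile : path_of_profile (path_profile C) = C.
Proof.
apply/ffunP => i; apply: val_inj; rewrite /= -[LHS]Cx_ord Cx_path_of_profile //.
rewrite (eq_in_count (a2 := fun x => x < C i)) ?count_ltn_iota; last first.
  by move=> x _; rewrite -path_profileE // Cx_ord.
by apply/minn_idPl; rewrite -ltnS.
Qed.

Lemma Cx_ge X h : 0 < X <= N -> (X <= Cx n k C h) = (h <= path_profile C X.-1).
Proof.
case/andP=> X0 XN; case: h => [|h] /=; first by rewrite XN.
case: (ltnP h k) => hk; first by rewrite -path_profileE //; lia.
by rewrite Cx_out //; have := path_profile_le X.-1; lia.
Qed.

Lemma west_on_L_path_profile :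
  west_on_L n k lam C = count (fun x => path_profile C x == col_len k lam x) (iota 0 N).
Proof.
pose on_L h X :=
  [&& Cx n k C h.+1 < X, X <= Cx n k C h, lamx n k lam h.+1 < X & X <= lamx n k lam h].
have card_on_L h : #|[set X : 'I_N.+1 | on_L h X]| = \sum_(0 <= X < N.+1) (on_L h X : nat).
  by rewrite card_ord_pred count_iota_sum.
rewrite /west_on_L (eq_bigr _ (fun h _ => card_on_L h)) exchange_big_nat big_nat_recl //.
rewrite big1 ?add0n => [|h _]; last by rewrite /on_L ltn0.
rewrite count_iota_sum; apply: eq_big_nat => x /andP[_ xN].
rewrite (eq_bigr (fun h => (h == path_profile C x) && (h == col_len k lam x) : nat)) => [|h _].
  by rewrite sum_nat_eq1 ltnS path_profile_le.
rewrite /on_L [Cx _ _ _ h.+1 < _]ltnNge [lamx _ _ _ h.+1 < _]ltnNge !Cx_ge ?lamx_ge //=.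
by case: ltngtP; case: ltngtP.
Qed.

End Path.

Lemma tableau_of_profile_beta_profile T : catalan_tableau n k lam T ->
  tableau_of_profile (beta_profile N k (tab_fun T)) = T.
Proof.
move=> T_tab; apply/ffunP => -[i x]; rewrite ffunE /= -tab_fun_filling //.
by rewrite tab_fun_ord.
Qed.

Definition tableau_of_path (C : {ffun 'I_k -> 'I_N.+1}) : {ffun 'I_k * 'I_N -> option bool} :=
  tableau_of_profile (path_profile C).

Definition path_of_tableau (T : {ffun 'I_k * 'I_N -> option bool}) : {ffun 'I_k -> 'I_N.+1} :=
  path_of_profile (beta_profile N k (tab_fun T)).

Section PathToTableau.
Variable C : {ffun 'I_k -> 'I_N.+1}.
Hypothesis C_path : catalan_path n k lam C.

Let e_decr := path_profile_decr C.
Let e_N := path_profile_N C.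
Let e_col_len x (_ : x < N) := path_profile_col_len C C_path x.

Lemma tableau_of_path_tableau : catalan_tableau n k lam (tableau_of_path C).
Proof. exact: tableau_of_profile_tableau e_decr e_N e_col_len. Qed.

Lemma tableau_of_pathK : path_of_tableau (tableau_of_path C) = C.
Proof.
rewrite /path_of_tableau -[RHS](path_of_profile_path_profile _ C_path).
apply: path_of_profile_eq_in => x /ltnW xN.
exact: beta_profile_tableau_of_profile e_decr e_N e_col_len x xN.
Qed.

Lemma tab_wt_tableau_of_path (R : fieldType) (a b : R) :
  tab_wt n k R a b (tableau_of_path C) = path_wt n k lam R a b C.
Proof.
rewrite /tab_wt /path_wt f_col_tableau_of_profile // f_row_beta_profile.
rewrite beta_profile_tableau_of_profile // south_on_west_path_profile.
by rewrite west_on_L_path_profile.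
Qed.

End PathToTableau.

Section TableauToPath.
Variable T : {ffun 'I_k * 'I_N -> option bool}.
Hypothesis T_tab : catalan_tableau n k lam T.

Let t := tab_fun T.
Let e_decr := beta_profile_decr N k t.
Let e_N := beta_profile_N N k t.
Let e_col_len x (_ : x < N) :=
  beta_profile_col_len _ _ _ _ (tab_support _ T_tab) x.

Lemma path_of_tableau_path : catalan_path n k lam (path_of_tableau T).
Proof. exact: path_of_profile_path _ e_decr e_N e_col_len. Qed.

Lemma path_of_tableauK : tableau_of_path (path_of_tableau T) = T.
Proof.
rewrite -[RHS](tableau_of_profile_beta_profile _ T_tab); apply/ffunP => c; rewrite !ffunE.
by apply: eq_filling => x; apply: path_profile_of_profile e_decr e_N e_col_len x.
Qed.

End TableauToPath.

End CatalanObjects.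

Theorem lemma1 (n k : nat) (lam : nat -> nat) :
  (1 <= k)%N -> (k <= n)%N -> young_shape n k lam ->
  exists f : {C : {ffun 'I_k -> 'I_(n - k).+1} | catalan_path n k lam C} ->
             {T : {ffun 'I_k * 'I_(n - k) -> option bool} | catalan_tableau n k lam T},
    bijective f /\
    forall (R : fieldType) (a b : R), a != 0%R -> b != 0%R ->
      forall C, path_wt n k lam R a b (val C) = tab_wt n k R a b (val (f C)).
Proof.
move=> _ _ [_ lam_antitone].
exists (fun C => exist _ (tableau_of_path n k lam (val C))
                         (tableau_of_path_tableau n k lam _ (valP C))).
split.
  exists (fun T => exist _ (path_of_tableau n k (val T))
                           (path_of_tableau_path n k lam lam_antitone _ (valP T))).
    by move=> C; apply/val_inj/tableau_of_pathK/valP.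
  by move=> T; apply/val_inj/path_of_tableauK/valP.
by move=> R a b _ _ C; rewrite /= tab_wt_tableau_of_path //; apply: valP.
Qed.
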